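(* For every $\widetilde r\in\mathbb{N}$, every $r_0\in\{0,\dots,b-1\}$ and every $d\in\mathbb{Z}$, \[\mu^{(b\widetilde r+r_0)}(d)=\frac{b-r_0}{b}\,\mu^{(\widetilde r)}(d-r_0)+\frac{r_0}{b}\,\mu^{(\widetilde r+1)}(d+b-r_0).\]
   Context: Fix an integer $b\ge2$. For $n\in\mathbb{N}$ with base-$b$ digits $n_k$, $s(n):=\sum_kn_k$. For $r,n\in\mathbb{N}$, $\Delta^{(r)}(n):=s(n+r)-s(n)$, and for $d\in\mathbb{Z}$, $\mu^{(r)}(d):=\lim_{N\to\infty}\frac1N|\{n<N:\Delta^{(r)}(n)=d\}|$ (these limits exist and define a probability measure on $\mathbb{Z}$; in particular $\mu^{(0)}=\delta_0$). *)

From Stdlib Require Import Reals Lra Lia ZArith Arith List.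
From Coquelicot Require Import Coquelicot.
Open Scope R_scope.

(* Base-b digit sum s(n) = sum of base-b digits of n.
   The fuel argument n suffices when b >= 2 (n / b < n for n > 0). *)
Fixpoint digsum_aux (b fuel n : nat) : nat :=
  match fuel with
  | O => O
  | S f => (n mod b + digsum_aux b f (n / b))%nat
  end.

Definition s (b n : nat) : nat := digsum_aux b n n.

Definition Delta (b r n : nat) : Z :=
  (Z.of_nat (s b (n + r)) - Z.of_nat (s b n))%Z.

Definition count_Delta (b r : nat) (d : Z) (N : nat) : nat :=
  length (filter (fun n => Z.eqb (Delta b r n) d) (seq 0 N)).

Definition mu (b r : nat) (d : Z) : R :=
  real (Lim_seq (fun N => INR (count_Delta b r d N) / INR N)).

(* Split n = b m + a by its last digit.  Adding b rt + r0 to n either leaves the last digit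
   without carry (a + r0 < b, which happens for b - r0 of the b values of a) and then
   Delta^(b rt + r0)(n) = r0 + Delta^(rt)(m), or it carries (the other r0 values of a) and then
   Delta^(b rt + r0)(n) = r0 - b + Delta^(rt + 1)(m).  Hence the count up to b M is an exact
   combination of the counts up to M for rt and rt + 1, and the frequencies converge along
   multiples of b, which suffices since counts grow by at most one per step.  The limits
   themselves exist by induction on r through the same identity. *)

From Stdlib Require Import Reals ZArith Lra Lia Arith List.
From Coquelicot Require Import Coquelicot.
Open Scope R_scope.

Definition count_range (f : nat -> bool) (st l : nat) : nat :=
  length (filter f (seq st l)).

Lemma count_range_app f st l1 l2 :
  count_range f st (l1 + l2) = (count_range f st l1 + count_range f (st + l1) l2)%nat.
Proof. unfold count_range. rewrite seq_app, filter_app, length_app. reflexivity. Qed.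

Lemma count_range_const f c st l :
  (forall k, (k < l)%nat -> f (st + k)%nat = c) -> count_range f st l = (l * Nat.b2n c)%nat.
Proof.
  revert st; induction l as [|l IH]; intros st Hf; [reflexivity|].
  unfold count_range; simpl.
  rewrite <- (Nat.add_0_r st) at 1; rewrite Hf by lia.
  assert (Htail : count_range f (S st) l = (l * Nat.b2n c)%nat).
  { apply IH. intros k Hk. replace (S st + k)%nat with (st + S k)%nat by lia. apply Hf. lia. }
  unfold count_range in Htail. destruct c; simpl; rewrite Htail; reflexivity.
Qed.

Lemma count_range_le f st l : (count_range f st l <= l)%nat.
Proof.
  unfold count_range. rewrite <- (length_seq l st) at 2. apply filter_length_le.
Qed.

Lemma Delta_0 b n : Delta b 0 n = 0%Z.
Proof. unfold Delta. rewrite Nat.add_0_r. lia. Qed.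

Section DigitSum.

Variable b : nat.
Hypothesis hb : (2 <= b)%nat.

Lemma digsum_aux_fuel f g n :
  (n <= f)%nat -> (f <= g)%nat -> digsum_aux b g n = digsum_aux b f n.
Proof.
  revert f g n.
  assert (step : forall f n, (n <= f)%nat -> digsum_aux b (S f) n = digsum_aux b f n).
  { induction f as [|f IH]; intros n Hn.
    - replace n with 0%nat by lia. simpl. rewrite Nat.Div0.mod_0_l. reflexivity.
    - change (n mod b + digsum_aux b (S f) (n / b) = n mod b + digsum_aux b f (n / b))%nat.
      rewrite IH; [reflexivity|].
      destruct n as [|n]; [rewrite Nat.Div0.div_0_l; lia|].
      assert (S n / b < S n)%nat by (apply Nat.div_lt; lia). lia. }
  intros f g n Hn Hfg. induction Hfg as [|g Hfg IH]; [reflexivity|].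
  rewrite step by lia. exact IH.
Qed.

Lemma s_mul_add m a : (a < b)%nat -> s b (b * m + a) = (a + s b m)%nat.
Proof.
  intros ha. unfold s.
  assert (Hmod : ((b * m + a) mod b = a)%nat).
  { rewrite Nat.add_comm, Nat.mul_comm, Nat.Div0.mod_add. apply Nat.mod_small, ha. }
  assert (Hdiv : ((b * m + a) / b = m)%nat).
  { rewrite Nat.add_comm, Nat.mul_comm, Nat.div_add, Nat.div_small by lia. reflexivity. }
  destruct (b * m + a)%nat as [|n] eqn:E.
  - replace m with 0%nat by nia. replace a with 0%nat by lia. reflexivity.
  - change (S n mod b + digsum_aux b n (S n / b) = a + digsum_aux b m m)%nat.
    rewrite Hmod, Hdiv, (digsum_aux_fuel m n m); nia.
Qed.

Lemma Delta_mul_add_nocarry rt r0 m a :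
  (a + r0 < b)%nat ->
  Delta b (b * rt + r0) (b * m + a) = (Z.of_nat r0 + Delta b rt m)%Z.
Proof.
  intros H. unfold Delta.
  replace (b * m + a + (b * rt + r0))%nat with (b * (m + rt) + (a + r0))%nat by lia.
  rewrite !s_mul_add by lia. lia.
Qed.

Lemma Delta_mul_add_carry rt r0 m a :
  (a < b)%nat -> (r0 < b)%nat -> (b <= a + r0)%nat ->
  Delta b (b * rt + r0) (b * m + a)
  = (Z.of_nat r0 - Z.of_nat b + Delta b (rt + 1) m)%Z.
Proof.
  intros Ha Hr0 H. unfold Delta.
  replace (b * m + a + (b * rt + r0))%nat with (b * (m + (rt + 1)) + (a + r0 - b))%nat by lia.
  rewrite !s_mul_add by lia. lia.
Qed.

Lemma Delta_1_le n : (Delta b 1 n <= 1)%Z.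
Proof.
  induction n as [n IH] using lt_wf_ind.
  rewrite (Nat.div_mod_eq n b). pose proof (Nat.mod_upper_bound n b ltac:(lia)).
  replace 1%nat with (b * 0 + 1)%nat at 1 by lia.
  destruct (Nat.lt_ge_cases (n mod b + 1) b).
  - rewrite Delta_mul_add_nocarry, Delta_0 by lia. lia.
  - rewrite Delta_mul_add_carry by lia.
    assert (n <> 0%nat) by (intros ->; rewrite Nat.Div0.mod_0_l in *; lia).
    specialize (IH (n / b)%nat (Nat.div_lt n b ltac:(lia) ltac:(lia))).
    change (0 + 1)%nat with 1%nat. lia.
Qed.

End DigitSum.

Lemma count_Delta_range b r d N :
  count_Delta b r d N = count_range (fun n => Delta b r n =? d)%Z 0 N.
Proof. reflexivity. Qed.

Lemma count_Delta_S b r d N :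
  count_Delta b r d (S N) = (count_Delta b r d N + Nat.b2n (Delta b r N =? d)%Z)%nat.
Proof.
  rewrite !count_Delta_range, <- Nat.add_1_r, count_range_app. unfold count_range at 2; simpl.
  destruct (Delta b r N =? d)%Z; reflexivity.
Qed.

Lemma count_Delta_add_bounds b r d N k :
  (count_Delta b r d N <= count_Delta b r d (N + k) <= count_Delta b r d N + k)%nat.
Proof.
  rewrite !count_Delta_range, count_range_app.
  pose proof (count_range_le (fun n => Delta b r n =? d)%Z (0 + N) k). lia.
Qed.

Section Blocks.

Variable b : nat.
Hypothesis hb : (2 <= b)%nat.
Variables (rt r0 : nat) (d : Z).
Hypothesis hr0 : (r0 < b)%nat.

Lemma count_Delta_block M :
  count_range (fun n => Delta b (b * rt + r0) n =? d)%Z (b * M) b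
  = ((b - r0) * Nat.b2n (Delta b rt M =? d - Z.of_nat r0)%Z
     + r0 * Nat.b2n (Delta b (rt + 1) M =? d + Z.of_nat b - Z.of_nat r0)%Z)%nat.
Proof.
  replace b with ((b - r0) + r0)%nat at 2 by lia.
  rewrite count_range_app; f_equal; apply count_range_const; intros k Hk;
    apply Bool.eq_iff_eq_true; rewrite !Z.eqb_eq.
  - rewrite Delta_mul_add_nocarry by lia. lia.
  - rewrite <- Nat.add_assoc, Delta_mul_add_carry by lia. lia.
Qed.

Lemma count_Delta_mul M :
  count_Delta b (b * rt + r0) d (b * M)
  = ((b - r0) * count_Delta b rt (d - Z.of_nat r0) M
     + r0 * count_Delta b (rt + 1) (d + Z.of_nat b - Z.of_nat r0) M)%nat.
Proof.
  induction M as [|M IH]; [rewrite Nat.mul_0_r; unfold count_Delta; simpl; lia|].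
  rewrite !count_Delta_S, count_Delta_range, Nat.mul_succ_r, count_range_app, Nat.add_0_l,
    count_Delta_block, <- count_Delta_range, IH.
  lia.
Qed.

End Blocks.

Lemma is_lim_seq_div_INR (K : R) : is_lim_seq (fun N => K / INR N) 0.
Proof.
  pose proof (is_lim_seq_scal_l _ K _ (is_lim_seq_inv _ _ is_lim_seq_INR ltac:(discriminate)))
    as H.
  simpl in H. rewrite Rmult_0_r in H. exact H.
Qed.

Lemma is_lim_seq_bounded_div_INR (x : nat -> nat) (K : nat) :
  (forall N, (x N <= K)%nat) -> is_lim_seq (fun N => INR (x N) / INR N) 0.
Proof.
  intros Hx.
  apply (is_lim_seq_le_le_loc (fun _ => 0) _ (fun N => INR K / INR N));
    [| apply is_lim_seq_const | apply is_lim_seq_div_INR].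
  exists 1%nat. intros N HN.
  assert (0 < / INR N) by (apply Rinv_0_lt_compat, lt_0_INR; lia).
  pose proof (pos_INR (x N)). pose proof (le_INR _ _ (Hx N)).
  unfold Rdiv. split; [apply Rmult_le_pos | apply Rmult_le_compat_r]; lra.
Qed.

(* The averages along multiples of [q] control all averages, because a counting function
   with increments in {0,1} moves by less than [q] between consecutive multiples of [q]. *)
Lemma is_lim_seq_density_multiples (c : nat -> nat) (q : nat) (l : R) :
  (0 < q)%nat ->
  (forall N k, (c N <= c (N + k) <= c N + k)%nat) ->
  is_lim_seq (fun M => INR (c (q * M)%nat) / INR (q * M)) l ->
  is_lim_seq (fun N => INR (c N) / INR N) l.
Proof.
  intros Hq Hc Hlim.
  set (lo N := (q * (N / q))%nat).
  assert (Hlo : forall N, (lo N <= N < lo N + q)%nat).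
  { intros N. unfold lo.
    pose proof (Nat.div_mod_eq N q). pose proof (Nat.mod_upper_bound N q ltac:(lia)). lia. }
  assert (Hclo : forall N, (c (lo N) <= c N <= c (lo N) + (N - lo N))%nat).
  { intros N. specialize (Hc (lo N) (N - lo N)%nat).
    replace (lo N + (N - lo N))%nat with N in Hc by (specialize (Hlo N); lia). exact Hc. }
  assert (Hsub : is_lim_seq (fun N => INR (c (lo N)) / INR (lo N)) l).
  { apply (is_lim_seq_subseq (fun M => INR (c (q * M)%nat) / INR (q * M))); [|exact Hlim].
    intros P [M0 HP]. exists (q * M0)%nat. intros N HN. apply HP.
    apply Nat.div_le_lower_bound; lia. }
  assert (Hgap : is_lim_seq (fun N => INR (N - lo N) / INR N) 0).
  { apply (is_lim_seq_bounded_div_INR _ q). intros N. specialize (Hlo N). lia. }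
  assert (Hjump : is_lim_seq (fun N => INR (c N - c (lo N)) / INR N) 0).
  { apply (is_lim_seq_bounded_div_INR _ q). intros N.
    specialize (Hlo N). specialize (Hclo N). lia. }
  apply (is_lim_seq_ext_loc (fun N => INR (c (lo N)) / INR (lo N) * (1 - INR (N - lo N) / INR N)
                                      + INR (c N - c (lo N)) / INR N)).
  - exists q. intros N HN.
    assert (q <= lo N)%nat.
    { unfold lo. pose proof (Nat.div_le_lower_bound N q 1 ltac:(lia) ltac:(lia)). nia. }
    assert (0 < INR (lo N)) by (apply lt_0_INR; lia).
    assert (0 < INR N) by (apply lt_0_INR; lia).
    rewrite !minus_INR by (specialize (Hlo N); specialize (Hclo N); lia).
    field. lra.
  - replace (Finite l) with (Finite (l * (1 - 0) + 0)) by (f_equal; ring).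
    apply is_lim_seq_plus'; [apply is_lim_seq_mult'|]; auto.
    apply is_lim_seq_minus'; [apply is_lim_seq_const | exact Hgap].
Qed.

Definition freq (b r : nat) (d : Z) (N : nat) : R := INR (count_Delta b r d N) / INR N.

Lemma is_lim_seq_freq_of_count b r d c :
  (forall N, count_Delta b r d N = (N * c)%nat) -> is_lim_seq (freq b r d) (INR c).
Proof.
  intros Hc. apply (is_lim_seq_ext_loc (fun _ => INR c)); [|apply is_lim_seq_const].
  exists 1%nat. intros N HN. unfold freq. rewrite Hc, mult_INR.
  assert (0 < INR N) by (apply lt_0_INR; lia). field. lra.
Qed.

Section Frequencies.

Variable b : nat.
Hypothesis hb : (2 <= b)%nat.

Lemma is_lim_seq_freq_mul_add rt r0 d (l1 l2 : R) :
  (r0 < b)%nat ->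
  is_lim_seq (freq b rt (d - Z.of_nat r0)) l1 ->
  is_lim_seq (fun M => INR r0 / INR b * freq b (rt + 1) (d + Z.of_nat b - Z.of_nat r0) M) l2 ->
  is_lim_seq (freq b (b * rt + r0) d) (INR (b - r0) / INR b * l1 + l2).
Proof.
  intros hr0 H1 H2.
  apply (is_lim_seq_density_multiples _ b); [lia | intros; apply count_Delta_add_bounds |].
  apply (is_lim_seq_ext_loc (fun M => INR (b - r0) / INR b * freq b rt (d - Z.of_nat r0) M
           + INR r0 / INR b * freq b (rt + 1) (d + Z.of_nat b - Z.of_nat r0) M)).
  - exists 1%nat. intros M HM. unfold freq.
    rewrite count_Delta_mul, plus_INR, !mult_INR by lia.
    assert (0 < INR b) by (apply lt_0_INR; lia).
    assert (0 < INR M) by (apply lt_0_INR; lia).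
    field. lra.
  - apply is_lim_seq_plus'; [exact (is_lim_seq_scal_l _ _ l1 H1) | exact H2].
Qed.

Lemma ex_finite_lim_freq_0 d : ex_finite_lim_seq (freq b 0 d).
Proof.
  exists (INR (Nat.b2n (0 =? d)%Z)). apply is_lim_seq_freq_of_count.
  intros N. rewrite count_Delta_range. apply count_range_const.
  intros k _. rewrite Delta_0. reflexivity.
Qed.

Lemma is_lim_seq_freq_1_large d : (2 <= d)%Z -> is_lim_seq (freq b 1 d) (INR 0).
Proof.
  intros Hd. apply is_lim_seq_freq_of_count.
  intros N. rewrite count_Delta_range, (count_range_const _ false); [reflexivity|].
  intros n _. apply Z.eqb_neq. pose proof (Delta_1_le b hb (0 + n)). lia.
Qed.

(* Induction on [2 - d]: the recursion sends [d] to [d + b - 1], and [Delta b 1 <= 1]. *)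
Lemma ex_finite_lim_freq_1 k d : (2 - d <= Z.of_nat k)%Z -> ex_finite_lim_seq (freq b 1 d).
Proof.
  revert d; induction k as [|k IH]; intros d Hd;
    (destruct (Z_le_gt_dec 2 d) as [Hd2|Hd2]; [eexists; apply is_lim_seq_freq_1_large, Hd2|]).
  - lia.
  - destruct (ex_finite_lim_freq_0 (d - Z.of_nat 1)) as [l1 H1].
    destruct (IH (d + Z.of_nat b - Z.of_nat 1)%Z ltac:(lia)) as [l2 H2].
    replace (freq b 1 d) with (freq b (b * 0 + 1) d) by (f_equal; lia).
    eexists. apply (is_lim_seq_freq_mul_add 0 1 d l1 (INR 1 / INR b * l2)); [lia | exact H1 |].
    exact (is_lim_seq_scal_l _ _ l2 H2).
Qed.

(* Strong induction on [r]: writing [r = b * rt + r0], both [rt] and [rt + 1] are smaller than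
   [r] except for [r <= 1], and for [r = b] with [b = 2], where the second weight [r0] vanishes. *)
Lemma ex_finite_lim_freq r d : ex_finite_lim_seq (freq b r d).
Proof.
  revert d; induction r as [r IH] using lt_wf_ind; intros d.
  destruct (Nat.le_gt_cases r 1) as [Hr|Hr].
  { destruct r as [|[|r]]; [apply ex_finite_lim_freq_0 | | lia].
    apply (ex_finite_lim_freq_1 (Z.to_nat (2 - d))). lia. }
  pose proof (Nat.mod_upper_bound r b ltac:(lia)).
  assert (Hrt : (r / b < r)%nat) by (apply Nat.div_lt; lia).
  destruct (IH (r / b)%nat Hrt (d - Z.of_nat (r mod b))%Z) as [l1 H1].
  rewrite (Nat.div_mod_eq r b).
  destruct (Nat.eq_dec (r mod b) 0) as [Hr0|Hr0].
  - rewrite Hr0 in *. eexists. apply (is_lim_seq_freq_mul_add _ _ _ l1 0); [lia | exact H1 |].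
    apply (is_lim_seq_ext (fun _ => 0)); [|apply is_lim_seq_const].
    intros M. simpl. unfold Rdiv. ring.
  - assert (Hrt1 : (r / b + 1 < r)%nat).
    { pose proof (Nat.div_mod_eq r b). destruct (r / b)%nat as [|q]; nia. }
    destruct (IH _ Hrt1 (d + Z.of_nat b - Z.of_nat (r mod b))%Z) as [l2 H2].
    eexists. apply (is_lim_seq_freq_mul_add _ _ _ l1 (INR (r mod b) / INR b * l2));
      [lia | exact H1 |].
    exact (is_lim_seq_scal_l _ _ l2 H2).
Qed.

End Frequencies.

Lemma mu_of_is_lim_seq b r d (l : R) : is_lim_seq (freq b r d) l -> mu b r d = l.
Proof. intros H. exact (f_equal real (is_lim_seq_unique _ _ H)). Qed.

Theorem mainTheorem8 (b : nat) (hb : (2 <= b)%nat)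
  (rt r0 : nat) (hr0 : (r0 < b)%nat) (d : Z) :
  mu b (b * rt + r0) d =
    INR (b - r0) / INR b * mu b rt (d - Z.of_nat r0)%Z
    + INR r0 / INR b * mu b (rt + 1) (d + Z.of_nat b - Z.of_nat r0)%Z.
Proof.
  destruct (ex_finite_lim_freq b hb rt (d - Z.of_nat r0)%Z) as [l1 H1].
  destruct (ex_finite_lim_freq b hb (rt + 1) (d + Z.of_nat b - Z.of_nat r0)%Z) as [l2 H2].
  pose proof (is_lim_seq_freq_mul_add b hb rt r0 d l1 (INR r0 / INR b * l2) hr0 H1
                (is_lim_seq_scal_l _ _ l2 H2)) as H.
  rewrite (mu_of_is_lim_seq _ _ _ _ H), (mu_of_is_lim_seq _ _ _ _ H1),
    (mu_of_is_lim_seq _ _ _ _ H2).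
  reflexivity.
Qed.
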